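(* Let $F$ be a nondyadic nonarchimedean local field (so $2$ is a unit in its ring of integers $R$). Then for every positive integer $n$, $u^\ast_R(n) = 2n$; that is, the minimal rank of a primitively $n$-universal $R$-lattice is exactly $2n$.
   Context: $F$ is a nonarchimedean local field of characteristic not $2$ with ring of integers $R$. An $R$-lattice is a finitely generated $R$-submodule $L$ of a quadratic space $(V,B)$ over $F$, with $Q(v)=B(v,v)$; all lattices are assumed integral ($B(L,L)\subseteq R$) and nondegenerate (Gram matrix nonsingular). A representation of $L$ into $M$ is an $R$-linear map $\sigma:L\to M$ with $B(\sigma v,\sigma v')=B(v,v')$; it is primitive if $\sigma(L)$ is a direct summand of $M$. An $R$-lattice is primitively $n$-universal if it primitively represents every (integral, nondegenerate) $R$-lattice of rank $n$. $u^\ast_R(n)$ denotes the minimal rank of a primitively $n$-universal $R$-lattice. *)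

From HB Require Import structures.
From mathcomp Require Import all_boot all_order all_algebra.
Set Implicit Arguments. Unset Strict Implicit. Unset Printing Implicit Defensive.
Import Order.TTheory GRing.Theory Num.Theory.
Local Open Scope ring_scope.

Section LocalField.
Variable F : fieldType.
Variable R : pred F.

Definition is_subring : Prop :=
  [/\ R 0, R 1, (forall x y, R x -> R y -> R (x - y))
    & (forall x y, R x -> R y -> R (x * y))].

Definition unitR (u : F) : Prop := [/\ R u, u != 0 & R u^-1].

Definition pi_cauchy (pi : F) (a : nat -> F) : Prop :=
  forall k : nat, exists N : nat, forall m n : nat, (N <= m)%N -> (N <= n)%N ->
    R ((a m - a n) / pi ^+ k).

Definition pi_converges (pi : F) (a : nat -> F) (x : F) : Prop :=
  forall k : nat, exists N : nat, forall n : nat, (N <= n)%N ->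
    R ((a n - x) / pi ^+ k).

(* F is a nonarchimedean local field whose ring of integers is R:
   R is a discrete valuation ring of F (with uniformizer pi),
   with finite residue field R / pi R, and F is complete for the
   pi-adic (= valuation) topology. *)
Definition nonarch_local_field_with_integers : Prop :=
  is_subring /\
  exists pi : F,
  [/\ R pi, pi != 0, ~ R pi^-1 &
      (forall x : F, x != 0 -> R x \/ R x^-1)] /\
  [/\
      (forall x : F, R x -> x != 0 ->
          exists (k : nat) (u : F), unitR u /\ x = pi ^+ k * u),
      (exists s : seq F, all R s /\
          forall x, R x -> exists2 y, y \in s & R ((x - y) / pi))
    & (forall a : nat -> F, pi_cauchy pi a -> exists x, pi_converges pi a x)].

Definition nondyadic : Prop := unitR 2.

(* An integral nondegenerate R-lattice of rank n, given (up to isometry) by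
   its Gram matrix in an R-basis: symmetric, entries in R, nonsingular. *)
Definition int_lattice (n : nat) (G : 'M[F]_n) : Prop :=
  [/\ G^T = G, (forall i j, R (G i j)) & \det G != 0].

Definition Rvec (m : nat) (v : 'rV[F]_m) : Prop := forall j, R (v 0 j).

(* X : rows are the images of the basis of L in the basis of M (R-coordinates);
   X represents L (Gram G) into M (Gram H). *)
Definition represents (n m : nat) (X : 'M[F]_(n, m)) (G : 'M[F]_n) (H : 'M[F]_m)
  : Prop := (forall i j, R (X i j)) /\ X *m H *m X^T = G.

Definition imageR (n m : nat) (X : 'M[F]_(n, m)) (v : 'rV[F]_m) : Prop :=
  exists c : 'rV[F]_n, Rvec c /\ v = c *m X.

Definition direct_summand (m : nat) (S : 'rV[F]_m -> Prop) : Prop :=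
  exists N : 'rV[F]_m -> Prop,
  [/\ (forall v, N v -> Rvec v), N 0,
      (forall v w, N v -> N w -> N (v + w)) &
      (forall a v, R a -> N v -> N (a *: v))] /\
  (forall v, Rvec v -> exists a b, [/\ S a, N b & v = a + b]) /\
  (forall v, S v -> N v -> v = 0).

Definition prim_represents (n m : nat) (G : 'M[F]_n) (H : 'M[F]_m) : Prop :=
  exists X : 'M[F]_(n, m), represents X G H /\ direct_summand (imageR X).

Definition prim_n_universal (n m : nat) (H : 'M[F]_m) : Prop :=
  int_lattice H /\
  forall G : 'M[F]_n, int_lattice G -> prim_represents G H.

Definition ustar_is (n k : nat) : Prop :=
  (exists H : 'M[F]_k, prim_n_universal n H) /\
  (forall (m : nat) (H : 'M[F]_m), prim_n_universal n H -> (k <= m)%N).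

End LocalField.

From HB Require Import structures.
From mathcomp Require Import all_boot all_order all_algebra.
From mathcomp Require Import zify.
Set Implicit Arguments. Unset Strict Implicit. Unset Printing Implicit Defensive.
Import GRing.Theory.
Local Open Scope ring_scope.

(* Upper bound: when 2 is a unit, the hyperbolic space of rank 2n represents a
   lattice with Gram matrix G through the rows of [1 | G/2], and the vectors
   with vanishing first block form a complement of their span.
   Lower bound: let M, of rank m < 2n and with pi^(k-1) || det M, primitively
   represent L = <pi^k, ..., pi^k> with complement N.  As rank N = m - n < n,
   some primitive y in L has sigma(y) orthogonal to N, hence B(sigma y, M) lies
   in pi^k R; the adjugate of the Gram matrix of M then puts sigma y in pi M.
   Since sigma(L) is a direct summand, y lies in pi L, a contradiction. *)

Lemma det_mxOver (T : comPzRingType) (S : subringClosed T) n (A : 'M[T]_n) :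
  A \is a mxOver S -> \det A \in S.
Proof.
move=> /mxOverP SA; apply: rpred_sum => s _.
by rewrite rpredMsign rpred_prod.
Qed.

Lemma adj_mxOver (T : comPzRingType) (S : subringClosed T) n (A : 'M[T]_n) :
  A \is a mxOver S -> \adj A \is a mxOver S.
Proof.
move=> /mxOverP SA; apply/mxOverP => i j; rewrite mxE /cofactor rpredMsign.
by apply: det_mxOver; apply/mxOverP => k l; rewrite !mxE.
Qed.

Lemma row_mx_mxOver (T : Type) (S : {pred T}) m n1 n2
    (A : 'M[T]_(m, n1)) (B : 'M[T]_(m, n2)) :
  A \is a mxOver S -> B \is a mxOver S -> row_mx A B \is a mxOver S.
Proof.
move=> /mxOverP SA /mxOverP SB; apply/mxOverP => i j.
by rewrite mxE; case: split.
Qed.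

Lemma col_mx_mxOver (T : Type) (S : {pred T}) m1 m2 n
    (A : 'M[T]_(m1, n)) (B : 'M[T]_(m2, n)) :
  A \is a mxOver S -> B \is a mxOver S -> col_mx A B \is a mxOver S.
Proof.
move=> /mxOverP SA /mxOverP SB; apply/mxOverP => i j.
by rewrite mxE; case: split.
Qed.

Lemma tr_mxOver (T : Type) (S : {pred T}) m n (A : 'M[T]_(m, n)) :
  (A^T \is a mxOver S) = (A \is a mxOver S).
Proof.
by apply/mxOverP/mxOverP => SA i j; have := SA j i; rewrite mxE.
Qed.

Lemma delta_mx_mxOver (T : pzSemiRingType) (S : semiringClosed T) m n
    (i : 'I_m) (j : 'I_n) :
  delta_mx i j \is a mxOver S.
Proof. by apply/mxOverP => k l; rewrite mxE rpred_nat. Qed.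

Section FieldMatrices.
Variable F : fieldType.

Lemma row_free_gram n m (X : 'M[F]_(n, m)) (H : 'M[F]_m) :
  X *m H *m X^T \in unitmx -> row_free X.
Proof.
move=> U; apply/row_freeP; exists (H *m X^T *m invmx (X *m H *m X^T)).
by rewrite !mulmxA mulmxV.
Qed.

Lemma mulmx_adj_solve m (H : 'M[F]_m) (v z : 'rV[F]_m) :
  \det H != 0 -> v *m H = \det H *: z -> v = z *m \adj H.
Proof.
move=> dH vH; apply: (scalerI dH).
by rewrite -mul_mx_scalar -mul_mx_adj mulmxA vH scalemxAl.
Qed.

Lemma gen_inverse_scaled_image n m (X : 'M[F]_(n, m)) (C : 'M[F]_(m, n))
    (y : 'rV[F]_n) (w : 'rV[F]_m) (a : F) :
  X *m C *m X = X -> row_free X -> a != 0 -> y *m X = a *: w ->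
  y = a *: (w *m C).
Proof.
move=> XCX freeX a0 yX.
have wCX : w *m C *m X = w.
  by apply: (scalerI a0); rewrite !scalemxAl -yX -!mulmxA (mulmxA X) XCX.
by apply: (row_free_inj freeX); rewrite yX -scalemxAl wCX.
Qed.

Lemma small_rank_kernel n m (X : 'M[F]_(n, m)) (C : 'M[F]_(m, n)) (H : 'M[F]_m) :
  (m < n + n)%N -> row_free X -> X *m C *m X = X ->
  exists2 y : 'rV[F]_n, y != 0 & y *m X *m H *m (1%:M - C *m X)^T = 0.
Proof.
move=> ltm freeX XCX; set B := 1%:M - C *m X.
have XB0 : X *m B = 0 by rewrite mulmxBr mulmx1 mulmxA XCX subrr.
have rB : (\rank B < n)%N.
  have := mxrank_mul_min X B; rewrite XB0 mxrank0 (eqP freeX).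
  have := rank_leq_row B; lia.
have : kermx (X *m H *m B^T) != 0.
  rewrite kermx_eq0 /row_free ltn_eqF //.
  by rewrite (leq_ltn_trans (mxrankM_maxr _ _)) ?mxrank_tr.
case/rowV0Pn => y /sub_kermxP yK y0.
by exists y; rewrite // !mulmxA in yK.
Qed.

End FieldMatrices.

Section IntegralLattices.
Variables (F : fieldType) (R : pred F).
Hypothesis subringR : is_subring R.

Fact subring_closedR : GRing.subring_closed R.
Proof. by case: subringR. Qed.
HB.instance Definition _ := GRing.isSubringClosed.Build F R subring_closedR.

Lemma RvecP n (v : 'rV[F]_n) : Rvec R v <-> v \is a mxOver R.
Proof.
split=> [Rv | /mxOverP Rv j]; last exact: Rv.
by apply/mxOverP => i j; rewrite ord1; apply: Rv.
Qed.

Definition hyperbolic_mx n : 'M[F]_(n + n) := block_mx 0 1%:M 1%:M 0.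

Lemma hyperbolic_mx_lattice n : int_lattice R (hyperbolic_mx n).
Proof.
have HH : hyperbolic_mx n *m hyperbolic_mx n = 1%:M.
  by rewrite mulmx_block !mulmx0 !mul0mx !mulmx1 !addr0 !add0r -scalar_mx_block.
split.
- by rewrite tr_block_mx !trmx0 trmx1.
- apply/mxOverP; rewrite /hyperbolic_mx block_mxEv.
  by rewrite col_mx_mxOver // row_mx_mxOver // ?mxOver0 ?mxOver_scalar
    ?rpred0 ?rpred1.
- apply: contra_neq (@oner_neq0 F) => dH0.
  by rewrite -(det1 F (n + n)) -HH det_mulmx dH0 mul0r.
Qed.

Lemma hyperbolic_mx_gram n (A : 'M[F]_n) :
  row_mx 1%:M A *m hyperbolic_mx n *m (row_mx 1%:M A)^T = A + A^T.
Proof.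
rewrite /hyperbolic_mx mul_row_block mulmx0 mulmx1 mul1mx mulmx0 add0r addr0.
by rewrite tr_row_mx trmx1 mul_row_col mulmx1 mul1mx.
Qed.

Lemma row_mx1_summand n p (A : 'M[F]_(n, p)) : A \is a mxOver R ->
  direct_summand R (imageR R (row_mx 1%:M A)).
Proof.
move=> RA; set X := row_mx 1%:M A.
have RX : X \is a mxOver R by rewrite row_mx_mxOver // mxOver_scalar ?rpred0 ?rpred1.
have lsubmxX (c : 'rV[F]_n) : lsubmx (c *m X) = c.
  by rewrite mul_mx_row mulmx1 row_mxKl.
exists (fun v => v \is a mxOver R /\ lsubmx v = 0); split; [|split].
- split.
  + by move=> v [Rv _]; apply/RvecP.
  + by rewrite mxOver0 ?rpred0 // linear0.
  + by move=> v w [Rv lv] [Rw lw]; rewrite rpredD // linearD /= lv lw addr0.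
  + by move=> a v Ra [Rv lv]; rewrite mxOverZ // linearZ /= lv scaler0.
- move=> v /RvecP Rv.
  have Rl : lsubmx v \is a mxOver R.
    by apply/mxOverP => i j; rewrite mxE (mxOverP Rv).
  exists (lsubmx v *m X), (v - lsubmx v *m X); split; last by rewrite addrC subrK.
  + by exists (lsubmx v); split => //; apply/RvecP.
  + by rewrite rpredB ?mxOverM // linearB /= lsubmxX subrr.
- by move=> v [c [_ ->]] [_]; rewrite lsubmxX => ->; rewrite mul0mx.
Qed.

Lemma hyperbolic_prim_n_universal n :
  unitR R 2 -> prim_n_universal R n (hyperbolic_mx n).
Proof.
move=> [_ n20 R2i]; split=> [|G [GT RG _]]; first exact: hyperbolic_mx_lattice.
have RA : 2^-1 *: G \is a mxOver R by rewrite mxOverZ //; apply/mxOverP.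
exists (row_mx 1%:M (2^-1 *: G)); split; last exact: row_mx1_summand.
split.
  by apply/mxOverP; rewrite row_mx_mxOver // mxOver_scalar ?rpred0 ?rpred1.
have halves : 2^-1 + 2^-1 = 1 :> F by rewrite -mulr2n -[_ *+ 2]mulr_natr mulVf.
by rewrite hyperbolic_mx_gram linearZ /= GT -scalerDl halves scale1r.
Qed.

(* Row l of C holds the coordinates of the projection of e_l onto the image of
   X along the complement. *)
Lemma direct_summand_gen_inverse n m (X : 'M[F]_(n, m)) :
  X \is a mxOver R -> direct_summand R (imageR R X) ->
  exists2 C : 'M[F]_(m, n), C \is a mxOver R & X *m C *m X = X.
Proof.
move=> RX [N [[_ N0 ND NZ] [Ndec Nint]]].
have /fin_all_exists [cb Hcb] : forall l : 'I_m, exists cb : 'rV[F]_n * 'rV[F]_m,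
    [/\ cb.1 \is a mxOver R, N cb.2 & delta_mx 0 l = cb.1 *m X + cb.2].
  move=> l.
  have /RvecP /Ndec [_ [b [[c [/RvecP Rc ->]] Nb E]]] :
    (delta_mx 0 l : 'rV[F]_m) \is a mxOver R by apply: delta_mx_mxOver.
  by exists (c, b).
pose C := \matrix_l (cb l).1; pose B := \matrix_l (cb l).2.
have RC : C \is a mxOver R.
  by apply/mxOverP => l i; rewrite mxE; case: (Hcb l) => /mxOverP.
have CXB : C *m X = 1%:M - B.
  apply/eqP; rewrite eq_sym subr_eq; apply/eqP/row_matrixP => l.
  by rewrite row1 linearD /= row_mul !rowK; case: (Hcb l).
have NB (r : 'rV[F]_m) : r \is a mxOver R -> N (r *m B).
  move=> Rr; rewrite mulmx_sum_row; apply: (big_ind N) => // l _.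
  by rewrite rowK; apply: NZ; [apply: (mxOverP Rr) | case: (Hcb l)].
have XB0 : X *m B = 0.
  apply/row_matrixP => i; rewrite row_mul row0; apply: Nint; last first.
    by apply: NB; rewrite rowE mxOverM ?delta_mx_mxOver.
  exists (delta_mx 0 i - row i X *m C); split.
    by apply/RvecP; rewrite rowE rpredB ?mxOverM ?delta_mx_mxOver.
  by rewrite mulmxBl -rowE -mulmxA CXB mulmxBr mulmx1 opprB addrC subrK.
by exists C; rewrite // -mulmxA CXB mulmxBr mulmx1 XB0 subr0.
Qed.

Section Valuation.
Hypothesis valR : forall x : F, x != 0 -> R x \/ R x^-1.

Lemma seq_divisor_mem (s : seq F) : has (predC1 0) s ->
  exists2 z, z \in s & z != 0 /\ {in s, forall x, x / z \in R}.
Proof.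
elim: s => //= x s IH.
have [-> /= /IH [z zs [z0 Rz]] | x0 _] := eqVneq x 0.
  exists z; first by rewrite inE zs orbT.
  by split=> // w; rewrite inE => /predU1P [->|/Rz //]; rewrite mul0r rpred0.
have [/IH [z zs [z0 Rz]] | /hasPn s0] := boolP (has (predC1 0) s); last first.
  exists x; first exact: mem_head.
  split=> // w; rewrite inE => /predU1P [->|/s0 /negPn /eqP ->].
    by rewrite divff ?rpred1.
  by rewrite mul0r rpred0.
have [Rxz | Rzx] := valR (mulf_neq0 x0 (invr_neq0 z0)).
  exists z; first by rewrite inE zs orbT.
  by split=> // w; rewrite inE => /predU1P [->|/Rz].
exists x; first exact: mem_head.
split=> // w; rewrite inE => /predU1P [->|/Rz Rwz]; first by rewrite divff ?rpred1.
rewrite invf_div in Rzx; rewrite -(divfK z0 w) -mulrA.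
exact: rpredM.
Qed.

Lemma primitive_rescale n (y : 'rV[F]_n) : y != 0 ->
  exists a j, (a *: y) \is a mxOver R /\ (a *: y) 0 j = 1.
Proof.
move=> y0.
have : has (predC1 0) [seq y 0 i | i <- enum 'I_n].
  apply: contraR y0 => /hasPn y0; apply/eqP/rowP => i; rewrite mxE.
  by apply/eqP/negPn/y0/map_f; rewrite mem_enum.
case/seq_divisor_mem => _ /mapP [j _ ->] [yj0 Ry].
exists (y 0 j)^-1, j; split; last by rewrite mxE mulVf.
apply/mxOverP => i k; rewrite ord1 mxE mulrC; apply/Ry/map_f.
by rewrite mem_enum.
Qed.

Variable pi : F.
Hypotheses (Rpi : R pi) (pi_neq0 : pi != 0) (Rpi_inv : ~ R pi^-1).
Hypothesis factorR : forall x, R x -> x != 0 ->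
  exists (k : nat) (u : F), unitR R u /\ x = pi ^+ k * u.

Lemma prim_n_universal_rank_ge n m (H : 'M[F]_m) :
  prim_n_universal R n H -> (n + n <= m)%N.
Proof.
move=> [[_ RH dH] univH].
have /det_mxOver RdH : H \is a mxOver R by apply/mxOverP.
have [j [u [[_ u0 Ru_inv] detH]]] := factorR RdH dH.
have [X [[RX XHX] sumX]] : prim_represents R ((pi ^+ j.+1)%:M : 'M_n) H.
  apply: univH; split; first by rewrite tr_scalar_mx.
    by apply/mxOverP; rewrite mxOver_scalar ?rpred0 ?rpredX.
  by rewrite det_scalar !expf_neq0.
have {}RX : X \is a mxOver R by apply/mxOverP.
have [C RC XCX] := direct_summand_gen_inverse RX sumX.
have freeX : row_free X.
  apply: (row_free_gram (H := H)).
  by rewrite XHX unitmxE det_scalar unitfE !expf_neq0.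
rewrite leqNgt; apply/negP => ltm.
have [y0 y00 y0K] := small_rank_kernel H ltm freeX XCX.
have [a [jj [Ry yjj]]] := primitive_rescale y00.
set y := a *: y0 in Ry yjj.
have yXH : y *m X *m H = \det H *: ((pi / u) *: (y *m C^T)).
  rewrite scalerA detH -mulrA (mulrCA u) divff // mulr1 -exprSr.
  (* Split 1 = C X + (1 - C X): sigma(y) is orthogonal to the complement. *)
  rewrite -[LHS]mulmx1 -trmx1 -[1%:M](subrK (C *m X)) linearD /= trmx_mul mulmxDr.
  rewrite /y -!scalemxAl y0K scaler0 add0r !mulmxA -(mulmxA y0 X H) -(mulmxA y0).
  by rewrite XHX mul_mx_scalar -scalemxAl scalerA mulrC -scalerA.
have yX : y *m X = pi *: (u^-1 *: (y *m C^T *m \adj H)).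
  by rewrite (mulmx_adj_solve dH yXH) scalerA -scalemxAl.
have Rw : u^-1 *: (y *m C^T *m \adj H) \is a mxOver R.
  by rewrite mxOverZ ?mxOverM ?adj_mxOver ?tr_mxOver //; apply/mxOverP.
have /(congr1 (fun z : 'rV_n => z 0 jj)) :=
  gen_inverse_scaled_image XCX freeX pi_neq0 yX.
rewrite yjj mxE => one_eq; apply: Rpi_inv.
by rewrite -[pi^-1]mulr1 one_eq mulKf //; apply: (mxOverP (mxOverM Rw RC)).
Qed.

End Valuation.
End IntegralLattices.

Theorem mainTheorem1 (F : fieldType) (R : pred F) :
  nonarch_local_field_with_integers R -> nondyadic R ->
  forall n : nat, (0 < n)%N -> ustar_is R n (2 * n)%N.
Proof.
move=> [subR [pi [[Rpi pi0 Rpi_inv valR] [factorR _ _]]]] unit2 n _.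
rewrite mul2n -addnn; split.
  by exists (hyperbolic_mx F n); apply: hyperbolic_prim_n_universal.
by move=> m H; apply: (prim_n_universal_rank_ge subR valR Rpi pi0 Rpi_inv).
Qed.
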